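(* Let $(V_1,\dots,V_n)$ and $(V_1',\dots,V_n')$ be $n$-tuples of doubly non-commuting isometries on Hilbert spaces $H$ and $H'$, with identical structure constants $z_{ij}$. Then the following are equivalent: (1) $(V_1,\dots,V_n)$ and $(V_1',\dots,V_n')$ are unitarily equivalent; (2) for every $A\subseteq\{1,\dots,n\}$, the $A$-wandering data $\mathcal D_A$ of $(V_1,\dots,V_n)$ and the $A$-wandering data $\mathcal D_A'$ of $(V_1',\dots,V_n')$ are unitarily equivalent.
   Context: Fix $n\ge1$ and $z_{ij}\in\mathbb T$ ($i\ne j$) with $z_{ji}=\overline{z_{ij}}$. An $n$-tuple of isometries $(V_1,\dots,V_n)$ on $H$ is doubly non-commuting if $V_i^*V_j=\overline{z_{ij}}V_jV_i^*$ for $i\neq j$. For $A\subseteq\{1,\dots,n\}$ with $A^c=\{j_1<\dots<j_m\}$, the $A$-wandering subspace is $W_A=\bigcap_{(m_j)\in\mathbb N_0^{A^c}}\big(\prod_{j\in A^c}V_j^{m_j}\big)\big(\bigcap_{i\in A}\ker V_i^*\big)$ (empty intersection of kernels $=H$, empty product $=$ identity); it reduces each $V_j$, $j\in A^c$, and the $A$-wandering data are the tuple $\mathcal D_A=(\mathbf 1_{W_A},V_{j_1}|_{W_A},\dots,V_{j_m}|_{W_A})$. Tuples $(T_1,\dots,T_r)$ on $K$ and $(T_1',\dots,T_r')$ on $K'$ are unitarily equivalent if there is a unitary $\varphi:K\to K'$ with $\varphi T_i=T_i'\varphi$ for all $i$. *)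

From HB Require Import structures.
From mathcomp Require Import all_boot all_order all_algebra.
From mathcomp Require Import complex.
From mathcomp Require Import reals.

Set Implicit Arguments.
Unset Strict Implicit.
Unset Printing Implicit Defensive.

Import Order.TTheory GRing.Theory Num.Theory.
Local Open Scope ring_scope.

Section Hilbert.
Variable R : realType.
Local Notation C := R[i].

Section OneSpace.
Variable H : lmodType C.
Variable ip : H -> H -> C.   (* inner product, linear in the first argument *)

Definition is_inner_product : Prop :=
  [/\ forall (a : C) (x y w : H), ip (a *: x + y) w = a * ip x w + ip y w,
      forall x y, ip y x = (ip x y)^*,
      forall x, 0 <= ip x x &
      forall x, ip x x = 0 -> x = 0].

(* Cauchy sequences / convergence w.r.t. the norm ||x|| = sqrt <x,x>
   (expressed through the squared norm, which is equivalent) *)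
Definition ip_cauchy (u : nat -> H) : Prop :=
  forall e : C, 0 < e -> exists N : nat, forall m k : nat, (N <= m)%N -> (N <= k)%N ->
    `|ip (u m - u k) (u m - u k)| < e.

Definition ip_converges (u : nat -> H) (x : H) : Prop :=
  forall e : C, 0 < e -> exists N : nat, forall m : nat, (N <= m)%N ->
    `|ip (u m - x) (u m - x)| < e.

Definition is_hilbert_space : Prop :=
  is_inner_product /\ forall u, ip_cauchy u -> exists x, ip_converges u x.

Definition is_linear_op (T : H -> H) : Prop :=
  forall (a : C) (x y : H), T (a *: x + y) = a *: T x + T y.

Definition is_isometry (T : H -> H) : Prop :=
  is_linear_op T /\ forall x y, ip (T x) (T y) = ip x y.

Definition is_adjoint (T S : H -> H) : Prop :=
  forall x y, ip (T x) y = ip x (S y).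

Variable n : nat.

Definition doubly_noncommuting (z : 'I_n -> 'I_n -> C) (V Vs : 'I_n -> H -> H) : Prop :=
  (forall i, is_isometry (V i) /\ is_adjoint (V i) (Vs i)) /\
  (forall i j, i != j -> forall x, Vs i (V j x) = (z i j)^* *: V j (Vs i x)).

(* prod_{j in A^c} V_j^{m_j} = V_{j1}^{m_{j1}} ... V_{jm}^{m_{jm}},  j1 < ... < jm *)
Definition prod_pow (V : 'I_n -> H -> H) (A : {set 'I_n}) (m : 'I_n -> nat) : H -> H :=
  foldr (fun j f => fun x => iter (m j) (V j) (f x)) id
        [seq j <- enum 'I_n | j \notin A].

(* the A-wandering subspace W_A (values of m on A are irrelevant) *)
Definition wandering (V Vs : 'I_n -> H -> H) (A : {set 'I_n}) : H -> Prop :=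
  fun x => forall m : 'I_n -> nat,
    exists y, (forall i, i \in A -> Vs i y = 0) /\ x = prod_pow V A m y.

End OneSpace.

Definition structure_constants (n : nat) (z : 'I_n -> 'I_n -> C) : Prop :=
  forall i j, i != j -> `|z i j| = 1 /\ z j i = (z i j)^*.

Definition unitary_between (H H' : lmodType C) (ip : H -> H -> C) (ip' : H' -> H' -> C)
  (W : H -> Prop) (W' : H' -> Prop) (phi : H -> H') : Prop :=
  [/\ forall x, W x -> W' (phi x),
      forall x', W' x' -> exists x, W x /\ phi x = x',
      forall (a : C) x y, W x -> W y -> phi (a *: x + y) = a *: phi x + phi y &
      forall x y, W x -> W y -> ip' (phi x) (phi y) = ip x y].

Definition unitarily_equivalent (H H' : lmodType C) (ip : H -> H -> C) (ip' : H' -> H' -> C)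
  (n : nat) (V : 'I_n -> H -> H) (V' : 'I_n -> H' -> H') : Prop :=
  exists phi : H -> H',
    unitary_between ip ip' (fun _ => True) (fun _ => True) phi /\
    forall i x, phi (V i x) = V' i (phi x).

(* unitary equivalence of the A-wandering data
   D_A = (1_{W_A}, V_{j1}|W_A, ..., V_{jm}|W_A) and D'_A
   (the component 1_{W_A} is intertwined by any phi) *)
Definition wandering_data_equivalent (H H' : lmodType C) (ip : H -> H -> C) (ip' : H' -> H' -> C)
  (n : nat) (V Vs : 'I_n -> H -> H) (V' Vs' : 'I_n -> H' -> H') (A : {set 'I_n}) : Prop :=
  exists phi : H -> H',
    unitary_between ip ip' (wandering V Vs A) (wandering V' Vs' A) phi /\
    forall j, j \notin A -> forall x, wandering V Vs A x -> phi (V j x) = V' j (phi x).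

End Hilbert.

(* For each A, let the family of vectors X w, with X a word in the V_i and V_i^*
   and w in W_A, be indexed by (A, X, w), and send the vector X w to X (phi_A w).
   The relations V_k^* V_k = 1 and V_k^* V_l = conj(z_kl) V_l V_k^* rewrite any
   word as a product of V's followed by a product of V^*'s, and W_A is orthogonal
   to W_B for A <> B; hence every inner product <w, X u> reduces to inner products
   inside a single W_A, which the unitaries phi_A preserve. So both families have
   the same Gram matrix. Both are total: starting from a vector orthogonal to all
   of them and applying, coordinate by coordinate, the Wold decomposition of V_j,
   one would reach a nonzero vector of some W_A orthogonal to itself. Two total
   families of a Hilbert space with the same Gram matrix are matched by a unitary,
   and this unitary intertwines the V_i because V_i^* permutes the family. *)

From mathcomp Require Import all_boot all_order all_algebra.
From mathcomp Require Import complex.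
From mathcomp Require Import reals.
From mathcomp Require Import boolp.
From mathcomp Require classical_sets.
From mathcomp Require Import zify ring lra.

Set Implicit Arguments.
Unset Strict Implicit.
Unset Printing Implicit Defensive.

Import Order.TTheory GRing.Theory Num.Theory.
Local Open Scope complex_scope.
Local Open Scope ring_scope.

Section ComplexParts.
Variable R : realType.
Implicit Types a b c : R[i].

Lemma cReD a b : complex.Re (a + b) = complex.Re a + complex.Re b.
Proof. by case: a; case: b. Qed.

Lemma cImD a b : complex.Im (a + b) = complex.Im a + complex.Im b.
Proof. by case: a; case: b. Qed.

Lemma cReN a : complex.Re (- a) = - complex.Re a.
Proof. by case: a. Qed.

Lemma cImN a : complex.Im (- a) = - complex.Im a.
Proof. by case: a. Qed.

Lemma cReM a b :
  complex.Re (a * b) = complex.Re a * complex.Re b - complex.Im a * complex.Im b.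
Proof. by case: a; case: b. Qed.

Lemma cImM a b :
  complex.Im (a * b) = complex.Re a * complex.Im b + complex.Im a * complex.Re b.
Proof. by case: a; case: b => * /=; lra. Qed.

Lemma cReJ a : complex.Re a^* = complex.Re a.
Proof. by case: a. Qed.

Lemma cImJ a : complex.Im a^* = - complex.Im a.
Proof. by case: a. Qed.

(* The squared modulus, kept real-valued so that [lra]/[nra] apply. *)
Definition sqmod c : R := complex.Re c ^+ 2 + complex.Im c ^+ 2.

Lemma sqmod_ge0 c : 0 <= sqmod c.
Proof. rewrite /sqmod; nra. Qed.

Lemma sqmod_eq0 c : sqmod c = 0 -> c = 0.
Proof.
case: c => a b; rewrite /sqmod /= => h.
have -> : a = 0 by nra.
by have -> : b = 0 by nra.
Qed.

Lemma sqmodN c : sqmod (- c) = sqmod c.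
Proof. by rewrite /sqmod cReN cImN !sqrrN. Qed.

Lemma sqmodJ c : sqmod c^* = sqmod c.
Proof. by rewrite /sqmod cReJ cImJ sqrrN. Qed.

Lemma sqmodD_le a b : sqmod (a + b) <= 2 * sqmod a + 2 * sqmod b.
Proof.
rewrite /sqmod cReD cImD.
have := sqr_ge0 (complex.Re a - complex.Re b).
have := sqr_ge0 (complex.Im a - complex.Im b).
rewrite !sqrrD ?sqrrB; lra.
Qed.

Lemma sqmod_small c : (forall e : R, 0 < e -> sqmod c < e) -> c = 0.
Proof.
move=> h; apply: sqmod_eq0; apply/eqP; rewrite eq_le sqmod_ge0 andbT.
by apply/ler_addgt0Pr => e he; rewrite add0r; apply/ltW/h.
Qed.

Lemma sqr_Re_conjM_le a b :
  complex.Re (a^* * b) ^+ 2 <= sqmod a * sqmod b.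
Proof.
rewrite cReM cReJ cImJ /sqmod.
have := sqr_ge0 (complex.Re a * complex.Im b - complex.Im a * complex.Re b); nra.
Qed.

Definition converges_C (f : nat -> R[i]) a :=
  forall e : R, 0 < e -> exists N, forall m, (N <= m)%N -> sqmod (f m - a) < e.

Lemma converges_C_unique f a b : converges_C f a -> converges_C f b -> a = b.
Proof.
move=> fa fb; apply/eqP; rewrite -subr_eq0; apply/eqP/sqmod_small => e he.
have [|Na hNa] := fa (e / 4); first lra.
have [|Nb hNb] := fb (e / 4); first lra.
set N := maxn Na Nb; have := hNa N (leq_maxl _ _); have := hNb N (leq_maxr _ _).
have -> : a - b = - (f N - a) + (f N - b) by rewrite opprB addrA subrK.
by move=> hb ha; apply: (le_lt_trans (sqmodD_le _ _)); rewrite sqmodN; lra.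
Qed.

End ComplexParts.

Definition epsn (R : realType) (m : nat) : R := (m.+1%:R)^-1.

Lemma epsn_gt0 (R : realType) m : 0 < epsn R m.
Proof. by rewrite invr_gt0 ltr0n. Qed.

Lemma epsn_small (R : realType) (e : R) :
  0 < e -> exists N, forall m, (N <= m)%N -> epsn R m < e.
Proof.
move=> he; exists (Num.Def.archi_bound e^-1) => m hm.
have hb : e^-1 < (Num.Def.archi_bound e^-1)%:R.
  by apply: archi_boundP; rewrite invr_ge0 ltW.
have hm1 : e^-1 < m.+1%:R.
  by apply: (lt_le_trans hb); rewrite ler_nat; apply: leqW.
by rewrite /epsn -(invrK e) ltf_pV2 ?posrE ?ltr0n ?invr_gt0.
Qed.

Section InnerProduct.
Variable R : realType.
Local Notation C := R[i].
Variables (H : lmodType C) (ip : H -> H -> C).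
Hypothesis hip : is_inner_product ip.

Lemma ipDl x y w : ip (x + y) w = ip x w + ip y w.
Proof. by case: hip => h _ _ _; have := h 1 x y w; rewrite scale1r mul1r. Qed.

Lemma ip0l w : ip 0 w = 0.
Proof. by apply: (@addrI _ (ip 0 w)); rewrite -ipDl !addr0. Qed.

Lemma ipZl a x w : ip (a *: x) w = a * ip x w.
Proof. by case: hip => h _ _ _; have := h a x 0 w; rewrite !addr0 ip0l addr0. Qed.

Lemma ipC x y : ip y x = (ip x y)^*.
Proof. by case: hip. Qed.

Lemma ip0r w : ip w 0 = 0.
Proof. by rewrite ipC ip0l conjC0. Qed.

Lemma ipNl x w : ip (- x) w = - ip x w.
Proof. by rewrite -scaleN1r ipZl mulN1r. Qed.

Lemma ipBl x y w : ip (x - y) w = ip x w - ip y w.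
Proof. by rewrite ipDl ipNl. Qed.

Lemma ipDr x y w : ip w (x + y) = ip w x + ip w y.
Proof. by rewrite [ip w x]ipC [ip w y]ipC ipC ipDl rmorphD. Qed.

Lemma ipZr a x w : ip w (a *: x) = a^* * ip w x.
Proof. by rewrite [ip w x]ipC ipC ipZl rmorphM. Qed.

Lemma ipNr x w : ip w (- x) = - ip w x.
Proof. by rewrite [ip w x]ipC ipC ipNl rmorphN. Qed.

Lemma ipBr x y w : ip w (x - y) = ip w x - ip w y.
Proof. by rewrite ipDr ipNr. Qed.

Lemma ip_eq0 x : ip x x = 0 -> x = 0.
Proof. by case: hip => _ _ _; apply. Qed.

Lemma ip_inj x x' : (forall y, ip y x = ip y x') -> x = x'.
Proof.
move=> h; apply/eqP; rewrite -subr_eq0; apply/eqP/ip_eq0.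
by rewrite ipBr h subrr.
Qed.

Definition sqnorm x : R := complex.Re (ip x x).

Lemma ip_sqnorm x : ip x x = (sqnorm x)%:C.
Proof.
case: hip => _ _ + _ => /(_ x); rewrite /sqnorm.
by case: (ip x x) => a b; rewrite lecE /= => /andP[/eqP -> _].
Qed.

Lemma sqnorm_ge0 x : 0 <= sqnorm x.
Proof. by case: hip => _ _ + _ => /(_ x); rewrite ip_sqnorm lecR. Qed.

Lemma sqnorm_eq0 x : sqnorm x = 0 -> x = 0.
Proof. by move=> h; apply: ip_eq0; rewrite ip_sqnorm h. Qed.

Lemma sqnormD x y :
  sqnorm (x + y) = sqnorm x + sqnorm y + 2 * complex.Re (ip x y).
Proof. by rewrite /sqnorm ipDl !ipDr !cReD [ip y x]ipC cReJ; lra. Qed.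

Lemma sqnormZ a x : sqnorm (a *: x) = sqmod a * sqnorm x.
Proof.
rewrite /sqnorm ipZl ipZr ip_sqnorm mulrA cReM /= mulr0 subr0.
by rewrite cReM cReJ cImJ /sqmod; lra.
Qed.

Lemma sqnormN x : sqnorm (- x) = sqnorm x.
Proof. by rewrite -scaleN1r sqnormZ /sqmod /=; lra. Qed.

Lemma sqnormB_sym x y : sqnorm (x - y) = sqnorm (y - x).
Proof. by rewrite -sqnormN opprB. Qed.

Lemma parallelogram x y :
  sqnorm (x + y) + sqnorm (x - y) = 2 * sqnorm x + 2 * sqnorm y.
Proof. by rewrite !sqnormD sqnormN ipNr cReN; lra. Qed.

Lemma sqnormD_le x y : sqnorm (x + y) <= 2 * sqnorm x + 2 * sqnorm y.
Proof. by have := parallelogram x y; have := sqnorm_ge0 (x - y); lra. Qed.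

Lemma sqnorm_triangle x y w :
  sqnorm (x - w) <= 2 * sqnorm (x - y) + 2 * sqnorm (y - w).
Proof. by have := sqnormD_le (x - y) (y - w); rewrite addrA subrK. Qed.

Lemma sqnormB_scale y a s :
  sqnorm (y - a *: s) =
  sqnorm y + sqmod a * sqnorm s - 2 * complex.Re (a^* * ip y s).
Proof. by rewrite sqnormD sqnormN sqnormZ ipNr ipZr cReN; lra. Qed.

(* Cauchy-Schwarz, up to the harmless factor 2 coming from treating real and
   imaginary parts separately. *)
Lemma sqmod_ip_le x y : sqmod (ip x y) <= 2 * (sqnorm x * sqnorm y).
Proof.
have CS_Re w : complex.Re (ip x w) ^+ 2 <= sqnorm x * sqnorm w.
  have [w0|nw0] := eqVneq (sqnorm w) 0.
    by rewrite w0 mulr0 (sqnorm_eq0 w0) ip0r expr0n.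
  have pw : 0 < sqnorm w by rewrite lt_def nw0 sqnorm_ge0.
  set r := complex.Re (ip x w); set a := r / sqnorm w.
  have ra : r = a * sqnorm w by rewrite /a divfK ?gt_eqF.
  have := sqnorm_ge0 (x - a%:C *: w).
  rewrite sqnormB_scale /sqmod cReM cReJ cImJ /= -/r ra => h.
  have h' : a ^+ 2 * sqnorm w <= sqnorm x by nra.
  by rewrite exprMn expr2 mulrA ler_pM2r //; nra.
have := CS_Re y; have := CS_Re ('i *: y).
rewrite sqnormZ ipZr /sqmod /= cReM /= expr0n expr1n /=; lra.
Qed.

Definition converges (u : nat -> H) x :=
  forall e : R, 0 < e -> exists N, forall m, (N <= m)%N -> sqnorm (u m - x) < e.

Definition cauchy (u : nat -> H) :=
  forall e : R, 0 < e -> exists N, forall m k, (N <= m)%N -> (N <= k)%N ->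
    sqnorm (u m - u k) < e.

Definition complete := forall u, cauchy u -> exists x, converges u x.

Lemma converges_cauchy u x : converges u x -> cauchy u.
Proof.
move=> h e he; have [|N hN] := h (e / 4); first lra.
exists N => m k hm hk; have := sqnorm_triangle (u m) x (u k).
rewrite (sqnormB_sym x); have := hN m hm; have := hN k hk; lra.
Qed.

Lemma converges_ipl u x b : converges u x -> converges_C (fun m => ip (u m) b) (ip x b).
Proof.
move=> h e he; have hb := sqnorm_ge0 b.
have [|N hN] := h (e / (2 * sqnorm b + 1)); first by apply: divr_gt0; lra.
exists N => m hm; rewrite -ipBl; apply: (le_lt_trans (sqmod_ip_le _ _)).
have := hN m hm; have := sqnorm_ge0 (u m - x).
rewrite ltr_pdivlMr; last lra.
nra.
Qed.

Lemma converges_ipr u x b : converges u x -> converges_C (fun m => ip b (u m)) (ip b x).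
Proof.
move=> h e he; have [N hN] := converges_ipl b h he; exists N => m hm.
by rewrite (ipC (u m)) (ipC x) -rmorphB sqmodJ; apply: hN.
Qed.

End InnerProduct.

Lemma hilbert_complete (R : realType) (H : lmodType R[i]) (ip : H -> H -> R[i]) :
  is_hilbert_space ip -> complete ip.
Proof.
case=> hip hc u hu.
have normC_sqnorm x : `|ip x x| = (sqnorm ip x)%:C.
  by rewrite ip_sqnorm // ger0_norm // lecR sqnorm_ge0.
have [|x hx] := hc u.
  move=> e; rewrite ltcE /= => /andP[/eqP ie re].
  have [N hN] := hu _ re; exists N => m k hm hk.
  by rewrite normC_sqnorm ltcE /= -ie eqxx /=; apply: hN.
exists x => e he; have [|N hN] := hx e%:C; first by rewrite ltcR.
by exists N => m hm; have := hN m hm; rewrite normC_sqnorm ltcR.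
Qed.

Section Density.
Variable R : realType.
Local Notation C := R[i].
Variables (H : lmodType C) (ip : H -> H -> C).
Hypothesis hip : is_inner_product ip.
Hypothesis hcomp : complete ip.
Local Notation sqnorm := (sqnorm ip).
Variable S : H -> Prop.
Hypothesis S0 : S 0.
Hypothesis S_comb : forall a x y, S x -> S y -> S (a *: x + y).
Hypothesis S_perp : forall y, (forall s, S s -> ip y s = 0) -> y = 0.

Lemma minimizing_seq x : exists d (v : nat -> H),
  [/\ forall w, S w -> d <= sqnorm (x - w), forall N, S (v N) &
      forall N, sqnorm (x - v N) < d + epsn R N].
Proof.
pose D : classical_sets.set R := fun r => exists2 w, S w & r = sqnorm (x - w).
have D_inf : classical_sets.has_inf D.
  split; first by exists (sqnorm (x - 0)); exists 0.
  by exists 0 => r [w _ ->]; apply: sqnorm_ge0.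
have near_inf N : exists w, S w /\ sqnorm (x - w) < inf D + epsn R N.
  by have [r [w Sw ->] hr] := inf_adherent (epsn_gt0 R N) D_inf; exists w.
have [v hv] := choice near_inf.
exists (inf D), v; split=> [w Sw|N|N]; try by case: (hv N).
apply: ge_inf; last by exists w.
by exists 0 => r [? _ ->]; apply: sqnorm_ge0.
Qed.

Section Minimizer.
Variables (x : H) (d : R) (v : nat -> H).
Hypothesis d_low : forall w, S w -> d <= sqnorm (x - w).
Hypothesis Sv : forall N, S (v N).
Hypothesis v_min : forall N, sqnorm (x - v N) < d + epsn R N.

(* Parallelogram law at the midpoint of [v m] and [v k], which lies in [S]. *)
Lemma minimizing_cauchy : cauchy ip v.
Proof.
move=> e he; have [|N hN] := @epsn_small R (e / 4); first lra.
exists N => m k hm hk.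
set mid := (1/2 : C) *: v m + (1/2 : C) *: v k.
have S_mid : S mid by apply: S_comb => //; rewrite -[_ *: v k]addr0; apply: S_comb.
have e_mid : (x - v m) + (x - v k) = (2 : C) *: (x - mid).
  rewrite scalerBr scalerDr !scalerA !(mulrC 2) !divfK ?pnatr_eq0 // !scale1r.
  by rewrite scaler_nat mulr2n opprD addrACA.
have := parallelogram hip (x - v m) (x - v k).
rewrite e_mid sqnormZ // opprB [x - v m + _]addrC addrA subrK (sqnormB_sym hip (v k)) => h.
have sqmod2 : sqmod (2 : C) = 4 by rewrite /sqmod /=; ring.
rewrite sqmod2 in h.
have := d_low S_mid; have := v_min m; have := v_min k.
have := hN m hm; have := hN k hk; lra.
Qed.

Lemma minimizer_orthogonal p : converges ip v p -> forall s, S s -> ip (x - p) s = 0.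
Proof.
move=> vp s Ss; set a := ip (x - p) s.
apply/eqP/negPn/negP => a_neq0.
have K_gt0 : 0 < sqmod a.
  by rewrite lt_def sqmod_ge0 andbT; apply: contra a_neq0 => /eqP /sqmod_eq0 ->.
set K := sqmod a in K_gt0.
have s_ge0 := sqnorm_ge0 hip s.
set r := (sqnorm s + 1)^-1.
have r_gt0 : 0 < r by rewrite invr_gt0; lra.
have rs_lt1 : r * sqnorm s < 1 by rewrite mulrC ltr_pdivrMr; lra.
have [|N1 hN1] := @epsn_small R (r * K / 2); first by rewrite divr_gt0 ?mulr_gt0.
have [|N2 hN2] := converges_ipl hip s vp (e := K / 16); first by rewrite divr_gt0.
set N := maxn N1 N2; set delta := ip p s - ip (v N) s.
have eps_small := hN1 N (leq_maxl _ _).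
have delta_small : sqmod delta < K / 16.
  by rewrite /delta -opprB sqmodN; apply: hN2; apply: leq_maxr.
(* Moving [v N] towards [s] by [r a] would beat the infimum [d]. *)
have := d_low (S_comb (r%:C * a) Ss (Sv N)).
have -> : x - ((r%:C * a) *: s + v N) = (x - v N) - (r%:C * a) *: s.
  by rewrite [_ *: s + v N]addrC opprD addrA.
rewrite sqnormB_scale //.
have -> : ip (x - v N) s = a + delta.
  by rewrite /a /delta !(ipBl hip) addrA subrK.
have -> : sqmod (r%:C * a) = r ^+ 2 * K.
  by rewrite /K /sqmod cReM cImM /=; ring.
have -> : complex.Re ((r%:C * a)^* * (a + delta)) =
    r * (K + complex.Re (a^* * delta)).
  by rewrite /K /sqmod !cReM ?cImM !cReJ !cImJ ?cReM ?cImM cReD cImD /=; ring.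
have := sqr_Re_conjM_le a delta; rewrite -/K.
set y := complex.Re (a^* * delta) => y_le.
have y_lt : - y < K / 4 by nra.
have shift_small : r ^+ 2 * K * sqnorm s < r * K.
  have -> : r ^+ 2 * K * sqnorm s = (r * K) * (r * sqnorm s) by ring.
  by rewrite gtr_pMr ?mulr_gt0.
have := v_min N; nra.
Qed.

End Minimizer.

Lemma subspace_dense x e : 0 < e -> exists2 w, S w & sqnorm (x - w) < e.
Proof.
move=> he; have [d [v [d_low Sv v_min]]] := minimizing_seq x.
have [p vp] := hcomp (minimizing_cauchy d_low Sv v_min).
have -> : x = p.
  apply/eqP; rewrite -subr_eq0; apply/eqP/S_perp.
  by move=> s; apply: (minimizer_orthogonal d_low Sv v_min vp).
have [N hN] := vp e he; exists (v N) => //.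
by rewrite sqnormB_sym //; apply: hN.
Qed.

End Density.

Section GramExtension.
Variable R : realType.
Local Notation C := R[i].
Variables (H H' : lmodType C) (ip : H -> H -> C) (ip' : H' -> H' -> C).
Hypotheses (hip : is_inner_product ip) (hip' : is_inner_product ip').
Hypotheses (hcomp : complete ip) (hcomp' : complete ip').
Variables (T : Type) (s : T -> H) (s' : T -> H').
Hypothesis gram : forall t u, ip (s t) (s u) = ip' (s' t) (s' u).
Hypothesis total : forall y, (forall t, ip y (s t) = 0) -> y = 0.
Hypothesis total' : forall y, (forall t, ip' y (s' t) = 0) -> y = 0.

Inductive paired_comb : H -> H' -> Prop :=
| paired_comb0 : paired_comb 0 0
| paired_comb_gen t : paired_comb (s t) (s' t)
| paired_combD a x x' y y' :
    paired_comb x x' -> paired_comb y y' -> paired_comb (a *: x + y) (a *: x' + y').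

Lemma paired_comb_ip_gen t y y' : paired_comb y y' -> ip (s t) y = ip' (s' t) y'.
Proof.
elim=> [|u|a x x' z z' _ IHx _ IHz]; first by rewrite (ip0r hip) (ip0r hip').
  exact: gram.
by rewrite (ipDr hip) (ipDr hip') (ipZr hip) (ipZr hip') IHx IHz.
Qed.

Lemma paired_comb_ip x x' y y' :
  paired_comb x x' -> paired_comb y y' -> ip x y = ip' x' y'.
Proof.
move=> + hy; elim=> [|t|a x0 x0' z z' _ IHx _ IHz].
- by rewrite (ip0l hip) (ip0l hip').
- exact: paired_comb_ip_gen.
- by rewrite (ipDl hip) (ipDl hip') (ipZl hip) (ipZl hip') IHx IHz.
Qed.

Lemma paired_combB x x' y y' :
  paired_comb x x' -> paired_comb y y' -> paired_comb (x - y) (x' - y').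
Proof.
move=> hx hy; have := paired_combD (-1) hy hx.
by rewrite !scaleN1r ![- _ + _]addrC.
Qed.

Lemma paired_comb_approx x : exists (w : nat -> H) (w' : nat -> H'),
  (forall m, paired_comb (w m) (w' m)) /\ converges ip w x.
Proof.
pose S w := exists w', paired_comb w w'.
have S0 : S 0 by exists 0; apply: paired_comb0.
have S_comb a y z : S y -> S z -> S (a *: y + z).
  by move=> [y' hy] [z' hz]; exists (a *: y' + z'); apply: paired_combD.
have S_perp y : (forall w, S w -> ip y w = 0) -> y = 0.
  by move=> hy; apply: total => t; apply: hy; exists (s' t); apply: paired_comb_gen.
have near_x N : exists p : H * H', paired_comb p.1 p.2 /\ sqnorm ip (x - p.1) < epsn R N.
  have [w [w' hw] hN] := subspace_dense hip hcomp S0 S_comb S_perp x (epsn_gt0 R N).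
  by exists (w, w').
have [p hp] := choice near_x.
exists (fun m => (p m).1), (fun m => (p m).2); split=> [m|e he]; first by case: (hp m).
have [N hN] := @epsn_small R e he; exists N => m hm.
by rewrite sqnormB_sym //; case: (hp m) => _ /lt_trans; apply; apply: hN.
Qed.

Lemma paired_comb_limit (w : nat -> H) (w' : nat -> H') x :
  (forall m, paired_comb (w m) (w' m)) -> converges ip w x ->
  exists2 y', converges ip' w' y' & forall t, ip' y' (s' t) = ip x (s t).
Proof.
move=> hw wx.
have [|y' w'y'] := hcomp' (u := w').
  move=> e he; have [N hN] := converges_cauchy hip wx he; exists N => m k hm hk.
  have hwB := paired_combB (hw m) (hw k).
  by rewrite /sqnorm -(paired_comb_ip hwB hwB); apply: hN.
exists y' => // t; apply: converges_C_unique (converges_ipl hip' (s' t) w'y') _.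
have := converges_ipl hip (s t) wx; congr converges_C.
by apply: funext => m; apply: paired_comb_ip (hw m) (paired_comb_gen t).
Qed.

Lemma gram_ext x : exists y', forall t, ip' y' (s' t) = ip x (s t).
Proof.
have [w [w' [hw wx]]] := paired_comb_approx x.
by have [y' _ hy'] := paired_comb_limit hw wx; exists y'.
Qed.

Definition gram_map x : H' := projT1 (cid (gram_ext x)).

Lemma gram_mapP x t : ip' (gram_map x) (s' t) = ip x (s t).
Proof. by rewrite /gram_map; case: (cid (gram_ext x)). Qed.

Lemma gram_map_unique x y' : (forall t, ip' y' (s' t) = ip x (s t)) -> y' = gram_map x.
Proof.
move=> h; apply/eqP; rewrite -subr_eq0; apply/eqP/total' => t.
by rewrite (ipBl hip') h gram_mapP subrr.
Qed.

Lemma gram_map_linear a x y : gram_map (a *: x + y) = a *: gram_map x + gram_map y.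
Proof.
symmetry; apply: gram_map_unique => t.
by rewrite (ipDl hip) (ipDl hip') (ipZl hip) (ipZl hip') !gram_mapP.
Qed.

Lemma gram_map_ip_comb x v v' : paired_comb v v' -> ip' (gram_map x) v' = ip x v.
Proof.
elim=> [|t|a y y' z z' _ IHy _ IHz]; first by rewrite (ip0r hip) (ip0r hip').
  exact: gram_mapP.
by rewrite (ipDr hip) (ipDr hip') (ipZr hip) (ipZr hip') IHy IHz.
Qed.

Lemma gram_map_isometry x y : ip' (gram_map x) (gram_map y) = ip x y.
Proof.
have [w [w' [hw wy]]] := paired_comb_approx y.
have [y' w'y' hy'] := paired_comb_limit hw wy.
rewrite -(gram_map_unique hy').
apply: converges_C_unique (converges_ipr hip' (gram_map x) w'y') _.
have := converges_ipr hip x wy; congr converges_C.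
by apply: funext => m; rewrite (gram_map_ip_comb x (hw m)).
Qed.

End GramExtension.

Lemma gram_unitary (R : realType) (H H' : lmodType R[i])
    (ip : H -> H -> R[i]) (ip' : H' -> H' -> R[i])
    (hip : is_inner_product ip) (hip' : is_inner_product ip')
    (hcomp : complete ip) (hcomp' : complete ip')
    (T : Type) (s : T -> H) (s' : T -> H')
    (gram : forall t u, ip (s t) (s u) = ip' (s' t) (s' u))
    (total : forall y, (forall t, ip y (s t) = 0) -> y = 0)
    (total' : forall y, (forall t, ip' y (s' t) = 0) -> y = 0) :
  exists phi : H -> H',
    unitary_between ip ip' (fun _ => True) (fun _ => True) phi /\
    forall x t, ip' (phi x) (s' t) = ip x (s t).
Proof.
pose phi := gram_map hip hip' hcomp hcomp' gram total.
exists phi; split; last exact: gram_mapP.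
split=> // [x' _|a x y _ _|x y _ _]; last 2 first.
- exact: gram_map_linear.
- exact: gram_map_isometry.
have gram' t u : ip' (s' t) (s' u) = ip (s t) (s u) by rewrite gram.
have [x hx] := gram_ext hip' hip hcomp' hcomp gram' total' x'.
by exists x; split=> //; symmetry; apply: gram_map_unique => // t; rewrite hx.
Qed.

Section LinearMap.
Variable R : realType.
Variables (U W : lmodType R[i]) (f : U -> W).
Hypothesis f_lin : forall a x y, f (a *: x + y) = a *: f x + f y.

Lemma linmap0 : f 0 = 0.
Proof.
have := f_lin 1 0 0; rewrite !scale1r addr0 => h.
by apply: (@addrI _ (f 0)); rewrite -h addr0.
Qed.

Lemma linmapZ a x : f (a *: x) = a *: f x.
Proof. by rewrite -[a *: x]addr0 f_lin linmap0 addr0. Qed.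

Lemma linmapD x y : f (x + y) = f x + f y.
Proof. by rewrite -[x]scale1r f_lin !scale1r. Qed.

Lemma linmapB x y : f (x - y) = f x - f y.
Proof. by rewrite -scaleN1r linmapD linmapZ scaleN1r. Qed.

End LinearMap.

Lemma iter_linear_op (R : realType) (H : lmodType R[i]) (F : H -> H) k :
  is_linear_op F -> is_linear_op (iter k F).
Proof. by move=> hF a x y; elim: k => //= k ->; rewrite hF. Qed.

Section DoublyNoncommuting.
Variable R : realType.
Local Notation C := R[i].
Variables (H : lmodType C) (ip : H -> H -> C).
Hypothesis hip : is_inner_product ip.
Variables (n : nat) (z : 'I_n -> 'I_n -> C).
Hypothesis hz : structure_constants z.
Variables V Vs : 'I_n -> H -> H.
Hypothesis hV : doubly_noncommuting ip z V Vs.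
Implicit Types (i j l : 'I_n) (x y w : H) (A B : {set 'I_n}).

Lemma z_unitary i j : i != j -> (z i j)^* * z i j = 1.
Proof. by move=> ij; rewrite -normCKC; case: (hz ij) => -> _; rewrite expr1n. Qed.

Lemma V_linear i : is_linear_op (V i).
Proof. by case: hV => h _; case: (h i) => [[]]. Qed.

Lemma V_isometry i x y : ip (V i x) (V i y) = ip x y.
Proof. by case: hV => h _; case: (h i) => [[_ ->]]. Qed.

Lemma V_adj i x y : ip (V i x) y = ip x (Vs i y).
Proof. by case: hV => h _; case: (h i) => _; apply. Qed.

Lemma Vs_adj i x y : ip (Vs i x) y = ip x (V i y).
Proof. by rewrite (ipC hip) -V_adj -(ipC hip). Qed.

Lemma Vs_V i j x : i != j -> Vs i (V j x) = (z i j)^* *: V j (Vs i x).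
Proof. by case: hV => _ h ij; apply: h. Qed.

Lemma Vs_linear i : is_linear_op (Vs i).
Proof.
move=> a x y; apply: (ip_inj hip) => w.
by rewrite -V_adj !(ipDr hip) !(ipZr hip) -!V_adj.
Qed.

Lemma VK i : cancel (V i) (Vs i).
Proof. by move=> x; apply: (ip_inj hip) => w; rewrite -V_adj V_isometry. Qed.

(* The two vectors have the same norm and their inner product has modulus
   [|z i j| * |x|^2 = |x|^2], so they coincide. *)
Lemma V_V i j x : i != j -> V i (V j x) = z i j *: V j (V i x).
Proof.
move=> ij; apply/eqP; rewrite -subr_eq0; apply/eqP/(ip_eq0 hip).
set a := V i (V j x); set b := V j (V i x).
have ab : ip a b = z i j * ip x x.
  by rewrite /a V_adj Vs_V // (ipZr hip) VK V_isometry conjCK.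
have ba : ip b a = (z i j)^* * ip x x.
  by rewrite (ipC hip a b) ab rmorphM {2}(ipC hip x x).
have aa : ip a a = ip x x by rewrite /a !V_isometry.
have bb : ip b b = ip x x by rewrite /b !V_isometry.
rewrite (ipBl hip) !(ipBr hip) !(ipZl hip) !(ipZr hip) ab ba aa bb.
by rewrite !mulrA [z i j * _]mulrC z_unitary // mul1r !subrr.
Qed.

Lemma Vs_Vs i j y : i != j -> Vs j (Vs i y) = (z i j)^* *: Vs i (Vs j y).
Proof.
move=> ij; apply: (ip_inj hip) => x.
by rewrite (ipZr hip) conjCK -!V_adj -(ipZl hip) -V_V.
Qed.

Lemma V_Vs j l x : j != l -> V j (Vs l x) = z l j *: Vs l (V j x).
Proof.
by move=> jl; rewrite Vs_V 1?eq_sym // scalerA mulrC z_unitary 1?eq_sym // scale1r.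
Qed.

Lemma Vs_Vs_eq0 i j v : i != j -> Vs i v = 0 -> Vs i (Vs j v) = 0.
Proof.
by move=> ij h; rewrite Vs_Vs 1?eq_sym // h (linmap0 (Vs_linear j)) scaler0.
Qed.

Lemma Vs_V_eq0 i j v : i != j -> Vs i v = 0 -> Vs i (V j v) = 0.
Proof. by move=> ij h; rewrite Vs_V // h (linmap0 (V_linear j)) scaler0. Qed.

Lemma iter_VK l k : cancel (iter k (V l)) (iter k (Vs l)).
Proof. by elim: k => // k IH y /=; rewrite -iterS iterSr VK IH. Qed.

Lemma iter_skew_comm (F P : H -> H) (c : C) :
  is_linear_op F -> (forall a y, P (a *: y) = a *: P y) ->
  (forall y, F (P y) = c *: P (F y)) ->
  forall k y, iter k F (P y) = c ^+ k *: P (iter k F y).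
Proof.
move=> hF hP hFP; elim=> [|k IH] y /=; first by rewrite scale1r.
by rewrite IH (linmapZ hF) hFP scalerA exprSr.
Qed.

(* [V_l^k V_l^*k], the projection onto the range of [V_l^k]. *)
Definition powproj l k x := iter k (V l) (iter k (Vs l) x).

Lemma powproj_linear l k : is_linear_op (powproj l k).
Proof.
move=> a x y.
by rewrite /powproj (iter_linear_op k (Vs_linear l)) (iter_linear_op k (V_linear l)).
Qed.

Lemma powproj_comm (F : H -> H) (c : C) l k x :
  (forall a y, F (a *: y) = a *: F y) ->
  (forall y, Vs l (F y) = c^* *: F (Vs l y)) -> (forall y, V l (F y) = c *: F (V l y)) ->
  c^* * c = 1 -> powproj l k (F x) = F (powproj l k x).
Proof.
move=> hF hVsF hVF cc; rewrite /powproj.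
rewrite (iter_skew_comm (Vs_linear l) hF hVsF) (linmapZ (iter_linear_op k (V_linear l))).
by rewrite (iter_skew_comm (V_linear l) hF hVF) scalerA -exprMn cc expr1n scale1r.
Qed.

Lemma powproj_Vs l j k x : l != j -> powproj l k (Vs j x) = Vs j (powproj l k x).
Proof.
move=> lj; apply: (powproj_comm (c := z j l)).
- exact: linmapZ (Vs_linear j).
- by move=> y; rewrite Vs_Vs // eq_sym.
- by move=> y; rewrite V_Vs.
- by rewrite z_unitary // eq_sym.
Qed.

Lemma powproj_V l j k x : l != j -> powproj l k (V j x) = V j (powproj l k x).
Proof.
move=> lj; apply: (powproj_comm (c := z l j)).
- exact: linmapZ (V_linear j).
- by move=> y; rewrite Vs_V.
- by move=> y; rewrite V_V.
- exact: z_unitary.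
Qed.

(* The paper's [W_A], described through the Wold decompositions of the [V_j]. *)
Definition wandering_spec A w :=
  (forall i, i \in A -> Vs i w = 0) /\ (forall j, j \notin A -> forall k, powproj j k w = w).

Lemma wandering_spec_Vs A j w : j \notin A -> wandering_spec A w -> wandering_spec A (Vs j w).
Proof.
move=> jA [ker fixed]; split=> [i iA|l lA k].
  by apply: Vs_Vs_eq0; [apply: contraNneq jA => <- | apply: ker].
have [<-|lj] := eqVneq j l; last by rewrite powproj_Vs 1?eq_sym // fixed.
by rewrite /powproj -iterSr -[in RHS](fixed _ jA k.+1) /powproj iterS VK.
Qed.

Local Notation prod_step m := (fun j (f : H -> H) x => iter (m j) (V j) (f x)).

Lemma prod_step0 (s : seq 'I_n) x : foldr (prod_step (fun _ => 0%N)) id s x = x.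
Proof. by elim: s => //= j s ->. Qed.

Lemma prod_step1 j k (s : seq 'I_n) x : uniq s ->
  foldr (prod_step (fun i => if i == j then k else 0%N)) id s x =
  if j \in s then iter k (V j) x else x.
Proof.
elim: s => //= i s IH /andP[i_notin us]; rewrite IH // in_cons.
by have [<-|//] := eqVneq i j; rewrite /= (negbTE i_notin).
Qed.

Lemma wanderingP A w : wandering V Vs A w <-> wandering_spec A w.
Proof.
split=> [hw|hw m].
  split=> [i iA|j jA k].
    by have [y [hy ->]] := hw (fun _ => 0%N); rewrite /prod_pow prod_step0 hy.
  have [y [_ ->]] := hw (fun i => if i == j then k else 0%N).
  rewrite /prod_pow prod_step1; last by rewrite filter_uniq // enum_uniq.
  by rewrite mem_filter jA mem_enum /powproj iter_VK.
(* Peel off [V_j^(m j)] for each [j] outside [A], in increasing order. *)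
pose peel w j := iter (m j) (Vs j) w.
suff peelK (s : seq 'I_n) w0 : {subset s <= [predC A]} -> wandering_spec A w0 ->
    foldr (prod_step m) id s (foldl peel w0 s) = w0 /\ wandering_spec A (foldl peel w0 s).
  have sA : {subset [seq j <- enum 'I_n | j \notin A] <= [predC A]}.
    by move=> j; rewrite mem_filter => /andP[].
  have [e1 [ker _]] := peelK _ w sA hw.
  by exists (foldl peel w [seq j <- enum 'I_n | j \notin A]).
elim: s w0 => [|j s IH] w0 sA hw0 //=.
have jA : j \notin A by apply: sA; rewrite mem_head.
have hw1 : wandering_spec A (peel w0 j).
  by rewrite /peel; elim: (m j) => //= k IHk; apply: wandering_spec_Vs.
have [-> hs] := IH _ (fun i i_s => sA i (@mem_behead _ (j :: s) i i_s)) hw1.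
by split=> //; case: hw0 => _ fixed; exact: fixed j jA (m j).
Qed.

Lemma wandering_Vs_eq0 A w i : wandering V Vs A w -> i \in A -> Vs i w = 0.
Proof. by move=> /wanderingP[+ _]; apply. Qed.

Lemma wandering_V_Vs A w j : wandering V Vs A w -> j \notin A -> V j (Vs j w) = w.
Proof. by move=> /wanderingP[_ fixed] /fixed /(_ 1%N). Qed.

Lemma wandering_Vs A w j :
  wandering V Vs A w -> j \notin A -> wandering V Vs A (Vs j w).
Proof. by move=> /wanderingP hw jA; apply/wanderingP/wandering_spec_Vs. Qed.

(* For [i] in [A] but not in [B], [w] is killed by [V_i^*] while [u] lies in
   the range of [V_i]. *)
Lemma wandering_orthogonal A B w u :
  A != B -> wandering V Vs A w -> wandering V Vs B u -> ip w u = 0.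
Proof.
have key A1 B1 w1 u1 i : i \in A1 -> i \notin B1 ->
    wandering V Vs A1 w1 -> wandering V Vs B1 u1 -> ip w1 u1 = 0.
  move=> iA iB hw hu.
  by rewrite -(wandering_V_Vs hu iB) -Vs_adj (wandering_Vs_eq0 hw iA) (ip0l hip).
move=> /eqP AB hw hu.
have [i hi] : exists i, (i \in A) != (i \in B).
  by apply/existsP; apply: contra_notT AB => /existsPn h; apply/setP => i; apply/eqP/negbNE.
move: hi; case iA: (i \in A); case iB: (i \in B) => // _; first exact: key iA (negbT iB) hw hu.
by rewrite (ipC hip) (key _ _ _ _ _ iB (negbT iA) hu hw) conjC0.
Qed.

Definition letter (b : bool) i : H -> H := if b then V i else Vs i.

(* A word [[:: (b1, i1); ...; (bk, ik)]] acts as the product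
   [letter b1 i1 \o ... \o letter bk ik]; [true] stands for [V], [false] for [V^*]. *)
Definition word (X : seq (bool * 'I_n)) x : H := foldr (fun c y => letter c.1 c.2 y) x X.

Definition word_adj (X : seq (bool * 'I_n)) := rev (map (fun c => (~~ c.1, c.2)) X).

Lemma word_linear X : is_linear_op (word X).
Proof.
move=> a x y; elim: X => //= [[[|] i]] X -> /=; first exact: V_linear.
exact: Vs_linear.
Qed.

Lemma word_cat X Y x : word (X ++ Y) x = word X (word Y x).
Proof. by rewrite /word foldr_cat. Qed.

Lemma letter_adj b i x y : ip (letter b i x) y = ip x (letter (~~ b) i y).
Proof. by case: b; [apply: V_adj | apply: Vs_adj]. Qed.

Lemma word_adjP X x y : ip (word X x) y = ip x (word (word_adj X) y).
Proof.
elim: X x y => //= c X IH x y.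
by rewrite letter_adj IH /word_adj map_cons rev_cons -cats1 word_cat.
Qed.

Definition words_perp y := forall A X w, wandering V Vs A w -> ip y (word X w) = 0.

Lemma words_perp_letter b i y : words_perp y -> words_perp (letter b i y).
Proof. by move=> hy A X w hw; rewrite letter_adj (hy A ((~~ b, i) :: X)). Qed.

Lemma words_perpB x y : words_perp x -> words_perp y -> words_perp (x - y).
Proof. by move=> hx hy A X w hw; rewrite (ipBl hip) (hx A X w hw) (hy A X w hw) subrr. Qed.

Definition defect j x := x - V j (Vs j x).

Definition partly_wandering (s : seq 'I_n) A y :=
  [/\ {subset A <= s}, forall i, i \in s -> i \in A -> Vs i y = 0 &
      forall j, j \in s -> j \notin A -> forall k, powproj j k y = y].

Lemma partly_wandering_defect s A j k y : j \notin s ->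
  partly_wandering s A y ->
  partly_wandering (j :: s) (j |: A) (defect j (iter k (Vs j) y)).
Proof.
move=> js [sA ker fixed].
split=> [i|i|i].
- by rewrite in_setU1 in_cons => /orP[->|/sA ->]; rewrite ?orbT.
- rewrite in_cons in_setU1 => /orP[/eqP ->|i_s] iA.
    by rewrite /defect (linmapB (Vs_linear j)) VK subrr.
  have ij : i != j by apply: contraNneq js => <-.
  rewrite (negbTE ij) /= in iA.
  have Vs_i : Vs i (iter k (Vs j) y) = 0.
    by elim: k => [|k IH] /=; [apply: ker | apply: Vs_Vs_eq0].
  rewrite /defect (linmapB (Vs_linear i)) Vs_i.
  by rewrite (Vs_V_eq0 ij (Vs_Vs_eq0 ij Vs_i)) subrr.
- rewrite in_cons in_setU1 => /orP[/eqP ->|i_s]; first by rewrite eqxx.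
  rewrite negb_or => /andP[ij iA] k'.
  have fixed_k : powproj i k' (iter k (Vs j) y) = iter k (Vs j) y.
    by elim: k => [|k IH] /=; [apply: fixed | rewrite powproj_Vs // IH].
  by rewrite /defect (linmapB (powproj_linear i k')) powproj_V // powproj_Vs // fixed_k.
Qed.

Lemma powproj_fixed j y :
  (forall k, defect j (iter k (Vs j) y) = 0) -> forall k, powproj j k y = y.
Proof.
move=> hd; elim=> // k IH; rewrite /powproj iterSr iterS -[RHS]IH /powproj.
by have /eqP := hd k; rewrite subr_eq0 => /eqP <-.
Qed.

(* Wold decomposition of each [V_j] in turn: either some defect vector of [y]
   survives, and lies in [ker V_j^*], or [y] is in the range of every power
   of [V_j]. *)
Lemma exists_partly_wandering (s : seq 'I_n) y : uniq s -> y != 0 -> words_perp y ->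
  exists y' A, [/\ y' != 0, words_perp y' & partly_wandering s A y'].
Proof.
move=> + y_neq0 hy; elim: s => [|j s IH] /=.
  by exists y, set0; split=> //; split=> // i; rewrite in_set0.
case/andP=> js /IH [y1 [A1 [y1_neq0 hy1 pw1]]].
have [[k dk]|no_defect] := pselect (exists k, defect j (iter k (Vs j) y1) != 0).
  exists (defect j (iter k (Vs j) y1)), (j |: A1); split=> //.
    have hk : words_perp (iter k (Vs j) y1).
      by elim: k {dk} => //= k IHk; apply: (words_perp_letter false).
    apply: words_perpB => //.
    by apply: (words_perp_letter true); apply: (words_perp_letter false).
  by apply: partly_wandering_defect.
have fixed_j : forall k, powproj j k y1 = y1.
  by apply: powproj_fixed => k; apply/eqP/negPn/negP => dk; apply: no_defect; exists k.
exists y1, A1; split=> //; case: pw1 => sA ker fixed.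
have jA : j \notin A1 by apply: contra js; apply: sA.
split=> [i /sA i_s|i|i]; first by rewrite in_cons i_s orbT.
  by rewrite in_cons => /orP[/eqP ->|]; [rewrite (negbTE jA) | apply: ker].
by rewrite in_cons => /orP[/eqP -> _|]; [apply: fixed_j | apply: fixed].
Qed.

Lemma words_perp_eq0 y : words_perp y -> y = 0.
Proof.
move=> hy; apply/eqP/negPn/negP => y_neq0.
have [y' [A [y'_neq0 hy' [_ ker fixed]]]] := exists_partly_wandering (enum_uniq 'I_n) y_neq0 hy.
have hw : wandering V Vs A y'.
  by apply/wanderingP; split=> [i|j]; [apply: ker | apply: fixed]; rewrite mem_enum.
by move: y'_neq0; rewrite (ip_eq0 hip (hy' A [::] y' hw)) eqxx.
Qed.

End DoublyNoncommuting.

Section WordMeasure.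
Variable n : nat.
Local Notation symbol := (bool * 'I_n)%type.
Implicit Types X Y Z : seq symbol.

Fixpoint inversions Z : nat :=
  if Z is c :: Z' then ((if c.1 then 0 else count (fun c : symbol => c.1) Z') + inversions Z')%N
  else 0%N.

Lemma inversions_cat X Y :
  inversions (X ++ Y) =
  (inversions X + inversions Y +
   count (fun c : symbol => ~~ c.1) X * count (fun c : symbol => c.1) Y)%N.
Proof. by elim: X => [|[[] i] X IH] /=; rewrite ?IH ?count_cat /=; lia. Qed.

(* Cancelling or commuting an adjacent [V^* V] decreases it, as does stripping
   a leading [V] or a trailing [V^*]. *)
Definition word_measure Z := (inversions Z * (size Z).+1 + size Z)%N.

Lemma word_measure_behead j Z : (word_measure Z < word_measure ((true, j) :: Z))%N.
Proof. rewrite /word_measure /=; nia. Qed.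

Lemma word_measure_belast i Z : (word_measure Z < word_measure (rcons Z (false, i)))%N.
Proof. by rewrite /word_measure -cats1 inversions_cat size_cat /= muln0; nia. Qed.

Lemma word_measure_cancel X k l Y :
  (word_measure (X ++ Y) < word_measure (X ++ (false, k) :: (true, l) :: Y))%N.
Proof. rewrite /word_measure !inversions_cat !size_cat /=; nia. Qed.

Lemma word_measure_swap X k l Y :
  (word_measure (X ++ (true, l) :: (false, k) :: Y) <
   word_measure (X ++ (false, k) :: (true, l) :: Y))%N.
Proof. rewrite /word_measure !inversions_cat !size_cat /=; nia. Qed.

Lemma word_cases Z :
  [\/ Z = [::], exists j Z', Z = (true, j) :: Z',
      exists i Z', Z = rcons Z' (false, i) |
      exists X k l Y, Z = X ++ (false, k) :: (true, l) :: Y].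
Proof.
case: Z => [|[[] k] Z]; [by constructor 1 | by constructor 2; exists k, Z |].
case/lastP: Z => [|Z [[] l]]; last by constructor 3; exists l, ((false, k) :: Z).
  by constructor 3; exists k, [::].
constructor 4; elim: Z k => [|[[] j] Z IH] k; first by exists [::], k, l, [::].
  by exists [::], k, j, (rcons Z (true, l)).
have [X [k' [l' [Y e]]]] := IH j.
by exists ((false, k) :: X), k', l', Y; rewrite /= -e.
Qed.

End WordMeasure.

Section Transport.
Variable R : realType.
Local Notation C := R[i].
Variables (H H' : lmodType C) (ip : H -> H -> C) (ip' : H' -> H' -> C).
Hypotheses (hip : is_inner_product ip) (hip' : is_inner_product ip').
Variables (n : nat) (z : 'I_n -> 'I_n -> C).
Hypothesis hz : structure_constants z.
Variables (V Vs : 'I_n -> H -> H) (V' Vs' : 'I_n -> H' -> H').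
Hypotheses (hV : doubly_noncommuting ip z V Vs) (hV' : doubly_noncommuting ip' z V' Vs').
Variable phi : {set 'I_n} -> H -> H'.
Hypothesis hphi : forall A,
  unitary_between ip ip' (wandering V Vs A) (wandering V' Vs' A) (phi A) /\
  forall j, j \notin A -> forall x, wandering V Vs A x -> phi A (V j x) = V' j (phi A x).
Implicit Types (A B : {set 'I_n}) (w u : H).

Lemma phi_wandering A w : wandering V Vs A w -> wandering V' Vs' A (phi A w).
Proof. by move=> hw; case: (hphi A) => [[h _ _ _] _]; exact: h hw. Qed.

Lemma phi_isometry A w u :
  wandering V Vs A w -> wandering V Vs A u -> ip' (phi A w) (phi A u) = ip w u.
Proof. by move=> hw hu; case: (hphi A) => [[_ _ _ h] _]; exact: h hw hu. Qed.

Lemma phi_V A j w : j \notin A -> wandering V Vs A w -> phi A (V j w) = V' j (phi A w).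
Proof. by move=> jA hw; case: (hphi A) => _ h; exact: h jA w hw. Qed.

Lemma phi_Vs A j w : j \notin A -> wandering V Vs A w -> phi A (Vs j w) = Vs' j (phi A w).
Proof.
move=> jA hw; rewrite -{2}(wandering_V_Vs hip hz hV hw jA).
by rewrite phi_V ?(VK hip' hV') //; exact: (wandering_Vs hip hz hV hw jA).
Qed.

(* Induction on [word_measure Z]: strip a leading [V] (moved to the left as
   [V^*]) or a trailing [V^*] (which acts on [u]), or cancel or commute an
   inner [V^* V]; the bare case is the orthogonality of the [W_A]. *)
Lemma gram_word Z A B w u : wandering V Vs A w -> wandering V Vs B u ->
  ip w (word V Vs Z u) = ip' (phi A w) (word V' Vs' Z (phi B u)).
Proof.
elim: {Z}(word_measure Z).+1 {-2}Z (ltnSn (word_measure Z)) A B w u => // N IH Z.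
move=> ZN A B w u hw hu.
case: (word_cases Z) ZN => [->|[j [Z' ->]]|[i [Z' ->]]|[X [k [l [Y ->]]]]] ZN.
- have [AB|AB] := eqVneq A B; first by subst B; rewrite /= phi_isometry.
  rewrite (wandering_orthogonal hip hz hV AB hw hu).
  by rewrite (wandering_orthogonal hip' hz hV' AB (phi_wandering hw) (phi_wandering hu)).
- rewrite /= -(Vs_adj hip hV) -(Vs_adj hip' hV').
  have [jA|jA] := boolP (j \in A).
    rewrite (wandering_Vs_eq0 hip hz hV hw jA).
    by rewrite (wandering_Vs_eq0 hip' hz hV' (phi_wandering hw) jA) (ip0l hip) (ip0l hip').
  rewrite -(phi_Vs jA hw); apply: IH (wandering_Vs hip hz hV hw jA) hu.
  exact: leq_trans (word_measure_behead j Z') ZN.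
- rewrite -!cats1 !word_cat /=.
  have [iB|iB] := boolP (i \in B).
    rewrite (wandering_Vs_eq0 hip hz hV hu iB)
      (wandering_Vs_eq0 hip' hz hV' (phi_wandering hu) iB).
    rewrite (linmap0 (word_linear hip hV Z')) (linmap0 (word_linear hip' hV' Z')).
    by rewrite (ip0r hip) (ip0r hip').
  rewrite -(phi_Vs iB hu); apply: IH hw (wandering_Vs hip hz hV hu iB).
  exact: leq_trans (word_measure_belast i Z') ZN.
- rewrite !word_cat /=; have [<-|kl] := eqVneq k l.
    rewrite (VK hip hV) (VK hip' hV') -!word_cat; apply: IH hw hu.
    exact: leq_trans (word_measure_cancel X k l Y) ZN.
  rewrite (Vs_V hV _ kl) (Vs_V hV' _ kl).
  rewrite (linmapZ (word_linear hip hV X)) (linmapZ (word_linear hip' hV' X)).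
  rewrite (ipZr hip) (ipZr hip').
  congr (_ * _); rewrite -[V l _]/(word V Vs [:: (true, l); (false, k)] _).
  rewrite -[V' l _]/(word V' Vs' [:: (true, l); (false, k)] _) -!word_cat -!catA.
  apply: IH hw hu.
  exact: leq_trans (word_measure_swap X k l Y) ZN.
Qed.

End Transport.

Section Forward.
Variable R : realType.
Local Notation C := R[i].
Variables (H H' : lmodType C) (ip : H -> H -> C) (ip' : H' -> H' -> C).
Hypotheses (hip : is_inner_product ip) (hip' : is_inner_product ip').
Variables (n : nat) (z : 'I_n -> 'I_n -> C).
Variables (V Vs : 'I_n -> H -> H) (V' Vs' : 'I_n -> H' -> H').
Hypotheses (hV : doubly_noncommuting ip z V Vs) (hV' : doubly_noncommuting ip' z V' Vs').
Variable U : H -> H'.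
Hypothesis hU : unitary_between ip ip' (fun _ => True) (fun _ => True) U.
Hypothesis U_V : forall i x, U (V i x) = V' i (U x).

Lemma U_linear a x y : U (a *: x + y) = a *: U x + U y.
Proof. by case: hU => _ _ + _; apply. Qed.

Lemma U_isometry x y : ip' (U x) (U y) = ip x y.
Proof. by case: hU => _ _ _; apply. Qed.

Lemma U_surjective x' : exists x, U x = x'.
Proof. by case: hU => _ /(_ x' I) [x [_ <-]]; exists x. Qed.

Lemma U_injective : injective U.
Proof.
move=> x y e; apply/eqP; rewrite -subr_eq0; apply/eqP/(ip_eq0 hip).
by rewrite -U_isometry (linmapB U_linear) e subrr (ip0l hip').
Qed.

Lemma U_Vs i x : U (Vs i x) = Vs' i (U x).
Proof.
apply: (ip_inj hip') => y'; have [y <-] := U_surjective y'.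
by rewrite U_isometry -(V_adj hV) -(V_adj hV') -U_V U_isometry.
Qed.

Lemma U_prod_pow A m y : U (prod_pow V A m y) = prod_pow V' A m (U y).
Proof.
rewrite /prod_pow; elim: [seq _ <- _ | _] y => //= j s IH y.
by rewrite -IH; elim: (m j) => //= k <-; rewrite U_V.
Qed.

Lemma wandering_data_of_unitary A : wandering_data_equivalent ip ip' V Vs V' Vs' A.
Proof.
have U0 := linmap0 U_linear.
exists U; split=> [|j _ x _]; last exact: U_V.
split=> [x hx m|x' hx'|a x y _ _|x y _ _]; last 2 first.
- exact: U_linear.
- exact: U_isometry.
- have [y [hy ->]] := hx m; exists (U y); split; last exact: U_prod_pow.
  by move=> i iA; rewrite -U_Vs hy.
have [x xx'] := U_surjective x'; subst x'; exists x; split=> // m.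
have [y' [hy' e]] := hx' m; have [y yy'] := U_surjective y'; subst y'.
exists y; split=> [i iA|]; apply: U_injective; last by rewrite U_prod_pow.
by rewrite U_Vs hy' // U0.
Qed.

End Forward.

Section Backward.
Variable R : realType.
Local Notation C := R[i].
Variables (H H' : lmodType C) (ip : H -> H -> C) (ip' : H' -> H' -> C).
Hypotheses (hH : is_hilbert_space ip) (hH' : is_hilbert_space ip').
Variables (n : nat) (z : 'I_n -> 'I_n -> C).
Hypothesis hz : structure_constants z.
Variables (V Vs : 'I_n -> H -> H) (V' Vs' : 'I_n -> H' -> H').
Hypotheses (hV : doubly_noncommuting ip z V Vs) (hV' : doubly_noncommuting ip' z V' Vs').
Variable phi : {set 'I_n} -> H -> H'.
Hypothesis hphi : forall A,
  unitary_between ip ip' (wandering V Vs A) (wandering V' Vs' A) (phi A) /\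
  forall j, j \notin A -> forall x, wandering V Vs A x -> phi A (V j x) = V' j (phi A x).

Let hip : is_inner_product ip := proj1 hH.
Let hip' : is_inner_product ip' := proj1 hH'.

Definition word_vector := {t : {set 'I_n} * seq (bool * 'I_n) * H | wandering V Vs t.1.1 t.2}.

Definition word_at (t : word_vector) : H := word V Vs (sval t).1.2 (sval t).2.

Definition word_at' (t : word_vector) : H' :=
  word V' Vs' (sval t).1.2 (phi (sval t).1.1 (sval t).2).

Lemma gram_word_at t u : ip (word_at t) (word_at u) = ip' (word_at' t) (word_at' u).
Proof.
case: t u => [[[A X] w] hw] [[[B Y] v] hv]; rewrite /word_at /word_at' /=.
rewrite (word_adjP hip hV) (word_adjP hip' hV') -!word_cat.
exact: (gram_word hip hip' hz hV hV' hphi (word_adj X ++ Y) hw hv).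
Qed.

Lemma word_at_total y : (forall t, ip y (word_at t) = 0) -> y = 0.
Proof.
move=> h; apply: (words_perp_eq0 hip hz hV) => A X w hw.
exact: (h (exist _ (A, X, w) hw)).
Qed.

Lemma word_at'_total y' : (forall t, ip' y' (word_at' t) = 0) -> y' = 0.
Proof.
move=> h; apply: (words_perp_eq0 hip' hz hV') => A X w' hw'.
case: (hphi A) => [[_ /(_ w' hw') [w [hw <-]] _ _] _].
exact: (h (exist _ (A, X, w) hw)).
Qed.

Definition word_at_Vs i (t : word_vector) : word_vector :=
  exist _ ((sval t).1.1, (false, i) :: (sval t).1.2, (sval t).2) (svalP t).

Lemma unitary_of_wandering_data : unitarily_equivalent ip ip' V V'.
Proof.
have [psi [unit_psi psiP]] := gram_unitary hip hip' (hilbert_complete hH) (hilbert_complete hH')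
  gram_word_at word_at_total word_at'_total.
exists psi; split=> // i x; apply/eqP; rewrite -subr_eq0; apply/eqP/word_at'_total => t.
rewrite (ipBl hip') psiP (V_adj hV) (V_adj hV').
rewrite -[Vs i (word_at t)]/(word_at (word_at_Vs i t)).
by rewrite -[Vs' i _]/(word_at' (word_at_Vs i t)) psiP subrr.
Qed.

End Backward.

Theorem theorem5p2 (R : realType) (n : nat) (hn : (1 <= n)%N)
  (z : 'I_n -> 'I_n -> R[i]) (hz : structure_constants z)
  (H : lmodType R[i]) (ip : H -> H -> R[i]) (hH : is_hilbert_space ip)
  (V Vs : 'I_n -> H -> H) (hV : doubly_noncommuting ip z V Vs)
  (H' : lmodType R[i]) (ip' : H' -> H' -> R[i]) (hH' : is_hilbert_space ip')
  (V' Vs' : 'I_n -> H' -> H') (hV' : doubly_noncommuting ip' z V' Vs') :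
  unitarily_equivalent ip ip' V V' <->
  (forall A : {set 'I_n}, wandering_data_equivalent ip ip' V Vs V' Vs' A).
Proof.
split=> [[U [unit_U U_V]] A|hphi].
  exact (wandering_data_of_unitary (proj1 hH) (proj1 hH') hV hV' unit_U U_V A).
have [phi hphi_A] := choice hphi.
exact (unitary_of_wandering_data hH hH' hz hV hV' hphi_A).
Qed.
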